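(* Let $A$ be a commutative $K$-algebra, $\mathcal{D}(A)$ its algebra of differential operators, $R$ a subalgebra of $\mathcal{D}(A)$ with $A\subseteq R$, and $R_i=R\cap\mathcal{D}(A)_i$ for $i\geq 0$. If $\mathfrak{a}$ is a nonzero ideal of $R$, then $\mathfrak{a}_0=\mathfrak{a}\cap A$ is a nonzero ideal of $A$ such that $[R_1,\mathfrak{a}_0]\subseteq\mathfrak{a}_0$ and $R\mathfrak{a}_0R\cap A=\mathfrak{a}_0$. Moreover, for an ideal $\mathfrak{a}_0$ of $A$ the condition $[R_1,\mathfrak{a}_0]\subseteq\mathfrak{a}_0$ is equivalent to $[D_R,\mathfrak{a}_0]\subseteq\mathfrak{a}_0$, where $D_R=R_1\cap\mathrm{Der}_K(A)$.
   Context: For a commutative $K$-algebra $A$, $\mathcal{D}(A)=\bigcup_{i\geq0}\mathcal{D}(A)_i\subseteq\mathrm{End}_K(A)$ where $\mathcal{D}(A)_{-1}=0$ and $\mathcal{D}(A)_i=\{u\in\mathrm{End}_K(A)\mid au-ua\in\mathcal{D}(A)_{i-1}\ \forall a\in A\}$; $A$ is identified with $\mathcal{D}(A)_0$ via multiplication operators. $[x,y]=xy-yx$. *)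

From HB Require Import structures.
From mathcomp Require Import all_boot all_order all_algebra.
Set Implicit Arguments. Unset Strict Implicit. Unset Printing Implicit Defensive.
Import GRing.Theory.
Local Open Scope ring_scope.

Section DiffOps.
Variables (K : fieldType) (A : comAlgType K).

Definition linop (u : A -> A) : Prop :=
  forall (k : K) (x y : A), u (k *: x + y) = k *: u x + u y.

(* identification of A with multiplication operators *)
Definition mulop (a : A) : A -> A := fun x => a * x.

Definition opcomm (u v : A -> A) : A -> A := fun x => u (v x) - v (u x).

(* DiffOrd i u  <->  u \in D(A)_i ; D(A)_{-1} = 0 *)
Fixpoint DiffOrd (i : nat) (u : A -> A) : Prop :=
  match i with
  | O => linop u /\ forall (a x : A), opcomm (mulop a) u x = 0
  | S j => linop u /\ forall a : A, DiffOrd j (opcomm (mulop a) u)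
  end.

Definition diffop (u : A -> A) : Prop := exists i, DiffOrd i u.

Definition derivation (u : A -> A) : Prop :=
  linop u /\ forall x y : A, u (x * y) = u x * y + x * u y.

Definition subalg_DA (R : (A -> A) -> Prop) : Prop :=
  (forall u, R u -> diffop u) /\
  (forall a : A, R (mulop a)) /\
  R (fun x => x) /\
  (forall u v, R u -> R v -> R (fun x => u x + v x)) /\
  (forall (k : K) u, R u -> R (fun x => k *: u x)) /\
  (forall u v, R u -> R v -> R (u \o v)).

Definition ideal_of (R I : (A -> A) -> Prop) : Prop :=
  [/\ (forall u, I u -> R u),
      I (fun _ => 0),
      (forall u v, I u -> I v -> I (fun x => u x + v x)),
      (forall r u, R r -> I u -> I (r \o u)) &
      (forall r u, R r -> I u -> I (u \o r))].

Definition nonzero_op_ideal (I : (A -> A) -> Prop) : Prop :=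
  exists u, I u /\ exists x, u x != 0.

Definition ideal0 (I : (A -> A) -> Prop) : A -> Prop := fun a => I (mulop a).

Definition ideal_A (J : A -> Prop) : Prop :=
  [/\ J 0, (forall x y, J x -> J y -> J (x + y)) & (forall a x, J x -> J (a * x))].

(* [R_1, J] \subseteq J, with R_1 = R \cap D(A)_1 *)
Definition bracket_R1 (R : (A -> A) -> Prop) (J : A -> Prop) : Prop :=
  forall u a, R u -> DiffOrd 1 u -> J a ->
    exists b, J b /\ forall x, opcomm u (mulop a) x = b * x.

(* [D_R, J] \subseteq J, with D_R = R_1 \cap Der_K(A) *)
Definition bracket_DR (R : (A -> A) -> Prop) (J : A -> Prop) : Prop :=
  forall u a, R u -> DiffOrd 1 u -> derivation u -> J a ->
    exists b, J b /\ forall x, opcomm u (mulop a) x = b * x.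

Definition RJR (R : (A -> A) -> Prop) (J : A -> Prop) (u : A -> A) : Prop :=
  exists (n : nat) (r s : 'I_n -> A -> A) (c : 'I_n -> A),
    (forall i, R (r i) /\ J (c i) /\ R (s i)) /\
    forall x, u x = \sum_(i < n) r i (c i * s i x).

End DiffOps.

From HB Require Import structures.
From mathcomp Require Import all_boot all_order all_algebra.
From mathcomp Require Import ring.
From Stdlib Require Import FunctionalExtensionality Classical.
Local Open Scope ring_scope.
Import GRing.Theory.
Set Implicit Arguments. Unset Strict Implicit.

(* An operator commuting with every multiplication operator is multiplication
   by its value at 1.  So if a_0 = 0, induction on the order shows that the
   ideal is 0: for u in it, every [a, u] is in it and of lower order, hence 0,
   so u is multiplication by u(1), an element of a_0.  For v of order 1 and a in
   a_0, [v, a] is an element of the ideal of order 0, i.e. of a_0.  Finally a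
   first-order v differs from the derivation v - v(1) by a multiplication
   operator, which commutes with A, so [R_1, a_0] and [D_R, a_0] coincide. *)

Section Operators.
Variables (K : fieldType) (A : comAlgType K).

Lemma mulop0 : mulop (0 : A) = fun _ => 0.
Proof. by apply: functional_extensionality => x; rewrite /mulop mul0r. Qed.

Lemma mulopD (a b : A) : mulop (a + b) = fun x => mulop a x + mulop b x.
Proof. by apply: functional_extensionality => x; rewrite /mulop mulrDl. Qed.

Lemma mulopM (a b : A) : mulop (a * b) = mulop a \o mulop b.
Proof. by apply: functional_extensionality => x; rewrite /mulop /= mulrA. Qed.

Lemma mulop_DiffOrd0 (b : A) : DiffOrd 0 (mulop b).
Proof.
split=> [k x y | a x]; first by rewrite /mulop mulrDr scalerAr.
by rewrite /opcomm /mulop mulrCA subrr.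
Qed.

Lemma central_op_mulop (v : A -> A) :
  (forall a x, opcomm (mulop a) v x = 0) -> v = mulop (v 1).
Proof.
move=> Hv; apply: functional_extensionality => x.
by have /eqP := Hv x 1; rewrite /opcomm /mulop mulr1 subr_eq0 mulrC => /eqP.
Qed.

Lemma opcomm_DiffOrd1_mulop (u : A -> A) (a : A) :
  DiffOrd 1 u -> opcomm u (mulop a) = mulop (opcomm u (mulop a) 1).
Proof.
move=> [_ Du]; apply: central_op_mulop => c x.
have [_ /(_ c x)] := Du a; rewrite /opcomm /mulop => E.
by rewrite -oppr0 -E; ring.
Qed.

Lemma DiffOrd1_mul (u : A -> A) (a x : A) :
  DiffOrd 1 u -> u (a * x) = a * u x + x * u a - a * x * u 1.
Proof.
move=> [_ Du]; have [_ /central_op_mulop/(congr1 (fun f => f x))] := Du a.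
rewrite /opcomm /mulop mulr1 => E.
have -> : u (a * x) = a * u x - (a * u x - u (a * x)) by ring.
by rewrite E; ring.
Qed.

Lemma derivation_DiffOrd1 (d : A -> A) : derivation d -> DiffOrd 1 d.
Proof.
move=> [ld Ld]; split=> // a.
have -> : opcomm (mulop a) d = mulop (- d a).
  by apply: functional_extensionality => x; rewrite /opcomm /mulop Ld; ring.
exact: mulop_DiffOrd0.
Qed.

Definition der_part (u : A -> A) : A -> A := fun x => u x - x * u 1.

Lemma der_part_derivation (u : A -> A) : DiffOrd 1 u -> derivation (der_part u).
Proof.
move=> Du; have [lu _] := Du; split=> [k x y | x y].
  by rewrite /der_part lu mulrDl -scalerAl scalerBr opprD addrACA.
by rewrite /der_part DiffOrd1_mul //; ring.
Qed.

Lemma opcomm_der_part (u : A -> A) (a x : A) :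
  opcomm (der_part u) (mulop a) x = opcomm u (mulop a) x.
Proof. by rewrite /opcomm /der_part /mulop; ring. Qed.

End Operators.

Section Subalgebra.
Variables (K : fieldType) (A : comAlgType K) (R : (A -> A) -> Prop).
Hypothesis HR : subalg_DA R.

Lemma subalg_mulop (a : A) : R (mulop a).
Proof. by case: HR => _ []. Qed.

Lemma subalg_id : R id.
Proof. by case: HR => _ [_ []]. Qed.

Lemma subalg_der_part (u : A -> A) : R u -> R (der_part u).
Proof.
move=> Ru; have [_ [_ [_ [addR _]]]] := HR.
have -> : der_part u = fun x => u x + mulop (- u 1) x.
  by apply: functional_extensionality => x; rewrite /der_part /mulop mulNr mulrC.
exact: addR Ru (subalg_mulop _).
Qed.

Lemma bracket_R1_DR (J : A -> Prop) : bracket_R1 R J <-> bracket_DR R J.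
Proof.
split=> [H v a Rv Dv _ | H v a Rv Dv Ja]; first exact: H.
have derv := der_part_derivation Dv.
have [b [Jb Eb]] := H _ a (subalg_der_part Rv) (derivation_DiffOrd1 derv) derv Ja.
by exists b; split=> // x; rewrite -opcomm_der_part.
Qed.

Section Ideal.
Variable I : (A -> A) -> Prop.
Hypothesis HI : ideal_of R I.

Lemma ideal_subalg u : I u -> R u.
Proof. by case: HI => H _ _ _ _; apply: H. Qed.

Lemma ideal0_op : I (fun _ => 0).
Proof. by case: HI. Qed.

Lemma idealD u v : I u -> I v -> I (fun x => u x + v x).
Proof. by case: HI => _ _ H _ _; apply: H. Qed.

Lemma ideal_compl r u : R r -> I u -> I (r \o u).
Proof. by case: HI => _ _ _ H _; apply: H. Qed.

Lemma ideal_compr r u : R r -> I u -> I (u \o r).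
Proof. by case: HI => _ _ _ _ H; apply: H. Qed.

Lemma idealN u : I u -> I (fun x => - u x).
Proof.
move=> Iu; have -> : (fun x => - u x) = mulop (-1) \o u.
  by apply: functional_extensionality => x; rewrite /mulop /= mulN1r.
exact: ideal_compl (subalg_mulop _) Iu.
Qed.

Lemma ideal_opcommr r u : R r -> I u -> I (opcomm r u).
Proof. by move=> Rr Iu; apply: idealD (ideal_compl Rr Iu) (idealN (ideal_compr Rr Iu)). Qed.

Lemma ideal_sum n (f : 'I_n -> A -> A) :
  (forall i, I (f i)) -> I (fun x => \sum_(i < n) f i x).
Proof.
elim: n f => [|n IH] f If.
  have -> : (fun x => \sum_(i < 0) f i x) = fun _ => 0.
    by apply: functional_extensionality => x; rewrite big_ord0.
  exact: ideal0_op.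
rewrite (_ : (fun x => _) = fun x => \sum_(i < n) f (widen_ord (leqnSn n) i) x + f ord_max x).
  by apply: idealD => //; apply: IH.
by apply: functional_extensionality => x; rewrite big_ord_recr.
Qed.

Lemma ideal0_ideal : ideal_A (ideal0 I).
Proof.
split=> [|a b Ia Ib|a b Ib]; rewrite /ideal0.
- by rewrite mulop0; apply: ideal0_op.
- by rewrite mulopD; apply: idealD.
- by rewrite mulopM; apply: ideal_compl (subalg_mulop a) Ib.
Qed.

Lemma ideal_DiffOrd_eq0 : (forall a, ideal0 I a -> a = 0) ->
  forall i u, I u -> DiffOrd i u -> u = fun _ => 0.
Proof.
move=> ideal0_eq0.
have central_eq0 u : I u -> (forall a x, opcomm (mulop a) u x = 0) -> u = fun _ => 0.
  move=> Iu /central_op_mulop Eu; rewrite Eu in Iu *.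
  by rewrite (ideal0_eq0 _ Iu) mulop0.
elim=> [|i IH] u Iu [_ Du]; apply: central_eq0 => // a x.
by rewrite (IH _ (ideal_opcommr (subalg_mulop a) Iu) (Du a)).
Qed.

Lemma ideal0_neq0 : nonzero_op_ideal I -> exists a, ideal0 I a /\ a != 0.
Proof.
move=> [u [Iu [x ux]]]; apply: NNPP => none.
have ideal0_eq0 a : ideal0 I a -> a = 0.
  by move=> Ia; case: (eqVneq a 0) => // anz; case: none; exists a.
have [i Du] : diffop u by case: HR => H _; apply/H/ideal_subalg.
by move: ux; rewrite (ideal_DiffOrd_eq0 ideal0_eq0 Iu Du) eqxx.
Qed.

Lemma ideal0_bracket_R1 : bracket_R1 R (ideal0 I).
Proof.
move=> v a Rv Dv Ia; have Ev := opcomm_DiffOrd1_mulop a Dv.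
exists (opcomm v (mulop a) 1); split; last by move=> x; rewrite {1}Ev.
by rewrite /ideal0 -Ev; apply: ideal_opcommr.
Qed.

Lemma RJR_ideal0 (y : A) : RJR R (ideal0 I) (mulop y) <-> ideal0 I y.
Proof.
split=> [[n [r [s [c [Hrcs Ey]]]]] | Iy].
  rewrite /ideal0 (_ : mulop y = fun x => \sum_(i < n) (r i \o mulop (c i) \o s i) x).
    apply: ideal_sum => i; have [Rr [Ic Rs]] := Hrcs i.
    exact: ideal_compl Rr (ideal_compr Rs Ic).
  exact: functional_extensionality.
exists 1%N, (fun _ => id), (fun _ => id), (fun _ => y); split.
  by move=> _; split; [|split]; [exact: subalg_id | | exact: subalg_id].
by move=> x; rewrite big_ord1.
Qed.

End Ideal.
End Subalgebra.

Theorem theorem1p8 (K : fieldType) (A : comAlgType K) (R : (A -> A) -> Prop) :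
  subalg_DA R ->
  (forall I : (A -> A) -> Prop, ideal_of R I -> nonzero_op_ideal I ->
     [/\ ideal_A (ideal0 I),
         (exists a, ideal0 I a /\ a != 0),
         bracket_R1 R (ideal0 I) &
         (forall y : A, RJR R (ideal0 I) (mulop y) <-> ideal0 I y)])
  /\
  (forall J : A -> Prop, ideal_A J -> (bracket_R1 R J <-> bracket_DR R J)).
Proof.
move=> HR; split=> [I HI nzI | J _]; last exact: (bracket_R1_DR HR).
split.
- exact: (ideal0_ideal HR HI).
- exact: (ideal0_neq0 HR HI nzI).
- exact: (ideal0_bracket_R1 HR HI).
- exact: (RJR_ideal0 HR HI).
Qed.
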